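(* Let $q$ be a prime power. Each of the following sets $\mathcal{S}$ is an optimal $(1,\mu)$-saturating set in $PG(2,q)$, with the stated size and $\mu$: (i) $\mathcal{S}$ is the union of $L$ distinct lines through a common point, where $2\le L\le q$; then $|\mathcal{S}|=1+Lq$ and $\mu=\binom{L}{2}q$. (ii) $\mathcal{S}$ is the union of $q$ distinct lines through a common point $G$ together with $b$ points, different from $G$, of the remaining $(q+1)$-th line through $G$, where $1\le b\le q-1$; then $|\mathcal{S}|=1+q^2+b$ and $\mu=\binom{b+1}{2}+\binom{q}{2}q$. (iii) $\mathcal{S}$ is a triangle, i.e. the union of three lines not through a common point; then $|\mathcal{S}|=3q$ and $\mu=3+(q-2)\binom{3}{2}=3(q-1)$. (iv) $\mathcal{S}=PG(2,q)\setminus T$, where $T$ is a vertex-less triangle, i.e. the union of three lines not through a common point with their three pairwise intersection points removed; then $|\mathcal{S}|=q^2-2q+4$ and $\mu=1+\binom{q}{2}+(q-1)\binom{q-2}{2}$.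
   Context: $PG(2,q)$ is the projective plane over $\mathbb{F}_q$. For a point set $\mathcal{S}$, a secant of $\mathcal{S}$ is a line $\ell$ with $|\ell\cap \mathcal{S}|\ge2$, counted with multiplicity $\binom{|\ell\cap \mathcal{S}|}{2}$. A set $\mathcal{S}$ of points of $PG(2,q)$ is $(1,\mu)$-saturating if (M1) $\mathcal{S}$ spans $PG(2,q)$, (M2) $\mathcal{S}\neq PG(2,q)$, and (M3) every point not in $\mathcal{S}$ lies on secants of $\mathcal{S}$ whose multiplicities sum to at least $\mu$; it is optimal if for every point not in $\mathcal{S}$ this sum is exactly $\mu$. *)

From HB Require Import structures.
From mathcomp Require Import all_boot all_order all_algebra.
Set Implicit Arguments. Unset Strict Implicit. Unset Printing Implicit Defensive.
Import GRing.Theory.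
Local Open Scope ring_scope.

(* A point is represented by its unique normalized homogeneous coordinate
   vector: a nonzero vector of F^3 whose first nonzero coordinate is 1.
   Lines are represented in the same way by their dual coordinates. *)

Definition normalized (F : fieldType) (v : 'rV[F]_3) : bool :=
  [exists i : 'I_3, (v 0 i == 1) && [forall j : 'I_3, (j < i)%N ==> (v 0 j == 0)]].

Notation point F := {v : 'rV[F]_3 | normalized v}.
Notation line F := {v : 'rV[F]_3 | normalized v}.

Definition inc (F : finFieldType) (x : point F) (l : line F) : bool :=
  \sum_(i < 3) (val x) 0 i * (val l) 0 i == 0.

Definition pts (F : finFieldType) (l : line F) : {set point F} :=
  [set x | inc x l].

Definition secant_mult (F : finFieldType) (S : {set point F}) (x : point F) : nat :=
  \sum_(l : line F | inc x l) 'C(#|S :&: pts l|, 2).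

Definition spans (F : finFieldType) (S : {set point F}) : bool :=
  \rank (\sum_(p in S) <<val p>>)%MS == 3.

Definition saturating (F : finFieldType) (mu : nat) (S : {set point F}) : Prop :=
  [/\ spans S, S != [set: point F] &
      forall x : point F, x \notin S -> (mu <= secant_mult S x)%N].

Definition optimal_saturating (F : finFieldType) (mu : nat) (S : {set point F}) : Prop :=
  saturating mu S /\ forall x : point F, x \notin S -> secant_mult S x = mu.

Definition union_lines (F : finFieldType) (Ls : {set line F}) : {set point F} :=
  \bigcup_(l in Ls) pts l.

Definition nonconcurrent (F : finFieldType) (l1 l2 l3 : line F) : Prop :=
  ~ exists x : point F, [&& inc x l1, inc x l2 & inc x l3].

Definition triangle (F : finFieldType) (l1 l2 l3 : line F) : {set point F} :=
  pts l1 :|: pts l2 :|: pts l3.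

Definition vertexless_triangle (F : finFieldType) (l1 l2 l3 : line F) : {set point F} :=
  triangle l1 l2 l3 :\: ((pts l1 :&: pts l2) :|: (pts l1 :&: pts l3) :|: (pts l2 :&: pts l3)).

From mathcomp Require Import all_boot all_order all_algebra.
From mathcomp Require Import zify.
Set Implicit Arguments. Unset Strict Implicit. Unset Printing Implicit Defensive.
Import GRing.Theory.
Local Open Scope ring_scope.

(* All counts are taken in a pencil.  The size of S is read off the sizes
   |S ∩ l| of the q + 1 lines l through one point, and secant_mult S x adds up
   C(|S ∩ l|, 2) over the q + 1 lines through x.  In each configuration the
   lines through a point x outside S fall into at most three classes on which
   |S ∩ l| is constant:
   (i)   the line joining x to the centre (1 point), the other q lines (L points);
   (ii)  the line m, which contains x (b + 1 points), the other q lines (q points);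
   (iii) the three lines joining x to a vertex (2 points), the other q - 2 lines
         (3 points);
   (iv)  for x on the side l1 only: l1 (its two vertices), the line joining x to
         the opposite vertex (q points), the other q - 1 lines (q - 2 points). *)

Lemma cards3 (T : finType) (a b c : T) :
  a != b -> a != c -> b != c -> #|[set a; b; c]| = 3%N.
Proof. by move=> ab ac bc; rewrite -setUA cardsU1 cards2 bc !inE negb_or ab ac. Qed.

Section ProjectivePlane.
Variable F : finFieldType.
Local Notation q := #|F|.
Implicit Types (x y a b l m n : point F) (u v : 'rV[F]_3).

Lemma normalized_neq0 u : normalized u -> u != 0.
Proof.
case/existsP=> i /andP[/eqP ui _]; apply: contra_eq_neq ui => ->.
by rewrite mxE eq_sym oner_neq0.
Qed.

Lemma normalized_submx_eq u v : normalized u -> normalized v -> (u <= v)%MS -> u = v.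
Proof.
move=> /existsP[i /andP[/eqP ui /forallP ui0]] /existsP[j /andP[/eqP vj /forallP vj0]].
case/sub_rVP=> c uc; have uE k : u 0 k = c * v 0 k by rewrite uc mxE.
have [ij|ji|/val_inj ij] := ltngtP i j.
- by move: ui; rewrite uE (eqP (implyP (vj0 i) ij)) mulr0 => /eqP; rewrite eq_sym oner_eq0.
- move: (eqP (implyP (ui0 j) ji)); rewrite uE vj mulr1 => c0.
  by move: ui; rewrite uE c0 mul0r => /eqP; rewrite eq_sym oner_eq0.
- by move: ui; rewrite uE ij vj mulr1 => c1; rewrite uc c1 scale1r.
Qed.

Lemma exists_normalized_scale u : u != 0 -> exists2 c, c != 0 & normalized (c *: u).
Proof.
move=> u0; have [i0 ui0] : exists i, u 0 i != 0.
  apply/existsP; apply: contraR u0 => /existsPn u0.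
  by apply/eqP/rowP => i; rewrite mxE; exact/eqP/negbNE.
case: (@arg_minnP _ _ (fun i => u 0 i != 0) (fun i : 'I_3 => nat_of_ord i) ui0) => i ui imin.
exists (u 0 i)^-1; first by rewrite invr_eq0.
apply/existsP; exists i; rewrite mxE mulVf // eqxx /=.
apply/forallP => j; apply/implyP => ji; rewrite mxE.
have [->|uj] := eqVneq (u 0 j) 0; first by rewrite mulr0.
by move: (imin j uj); rewrite leqNgt ji.
Qed.

Lemma exists_point_scale u : u != 0 ->
  exists p : point F, exists2 c, c != 0 & val p = c *: u.
Proof.
by case/exists_normalized_scale => c c0 nu; exists (Sub (c *: u) nu), c; rewrite ?SubK.
Qed.

Lemma incE x l : inc x l = (val x *m (val l)^T == 0).
Proof.
have -> : (val x *m (val l)^T == 0) = ((val x *m (val l)^T) 0 0 == 0).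
  apply/eqP/eqP => [->|M0]; first by rewrite mxE.
  by apply/matrixP => i j; rewrite !ord1 M0 mxE.
by rewrite /inc mxE; congr (_ == _); apply: eq_bigr => k _; rewrite mxE.
Qed.

Lemma incC x l : inc x l = inc l x.
Proof. by rewrite /inc; congr (_ == _); apply: eq_bigr => k _; exact: mulrC. Qed.

Lemma exists_line_kernel k (M : 'M[F]_(k, 3)) : (\rank M < 3)%N ->
  exists l : point F, M *m (val l)^T = 0.
Proof.
move=> rM; set K := kermx M^T.
have K0 : nz_row K != 0.
  by rewrite nz_row_eq0 -mxrank_eq0 mxrank_ker mxrank_tr subn_eq0 -ltnNge.
have KM : nz_row K *m M^T = 0 by apply/sub_kermxP; exact: nz_row_sub.
have [l [c c0 lc]] := exists_point_scale K0.
by exists l; apply: trmx_inj; rewrite trmx_mul trmxK trmx0 lc -scalemxAl KM scaler0.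
Qed.

Lemma eq_point_rank_le1 a b k (K : 'M[F]_(k, 3)) :
  (val a <= K)%MS -> (val b <= K)%MS -> (\rank K <= 1)%N -> a = b.
Proof.
move=> aK bK rK; have ra : \rank (val a) = 1%N by rewrite rank_rV normalized_neq0 ?(valP a).
have /leqifP := mxrank_leqif_eq aK; rewrite ra.
case: ifP => [/andP[_ Ka] _|_]; last by rewrite ltnNge rK.
by apply/val_inj/esym/normalized_submx_eq; rewrite ?(valP a) ?(valP b) ?(submx_trans bK Ka).
Qed.

Lemma exists_join x y : exists l, inc x l && inc y l.
Proof.
have [l xyl] := @exists_line_kernel _ (col_mx (val x) (val y))
  (leq_ltn_trans (rank_leq_row _) (isT : (2 < 3)%N)).
by exists l; move/eqP: xyl; rewrite !incE mul_col_mx col_mx_eq0.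
Qed.

Lemma join_unique x y l m : x != y ->
  inc x l -> inc y l -> inc x m -> inc y m -> l = m.
Proof.
rewrite !incE => xy xl yl xm ym; set N := col_mx (val l) (val m).
(* Either l and m span a line of F^3, so l = m, or their common kernel does,
   so x = y. *)
have [rN|rN] := leqP (\rank N) 1.
  have /andP[lN mN] : (val l <= N)%MS && (val m <= N)%MS by rewrite -col_mx_sub.
  exact: eq_point_rank_le1 lN mN rN.
have xyK (z : point F) : val z *m (val l)^T == 0 -> val z *m (val m)^T == 0 ->
    (val z <= kermx N^T)%MS.
  by move=> /eqP zl /eqP zm; rewrite sub_kermx tr_col_mx mul_mx_row zl zm row_mx0.
have rK : (\rank (kermx N^T) <= 1)%N by rewrite mxrank_ker mxrank_tr; lia.
by rewrite (eq_point_rank_le1 (xyK x xl xm) (xyK y yl ym) rK) eqxx in xy.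
Qed.

Lemma meet_unique a b l m : l != m ->
  inc a l -> inc a m -> inc b l -> inc b m -> a = b.
Proof. by move=> lm; rewrite ![inc _ l]incC ![inc _ m]incC; exact: join_unique. Qed.

(* Points and lines have the same type and [inc] is symmetric, so [join l m]
   of two lines is their intersection point. *)
Definition join x y : point F := odflt x [pick l | inc x l && inc y l].

Lemma join_inc x y : inc x (join x y) && inc y (join x y).
Proof.
rewrite /join; case: pickP => [l //|none].
by have [l xyl] := exists_join x y; rewrite none in xyl.
Qed.

Lemma join_incl x y : inc x (join x y). Proof. by case/andP: (join_inc x y). Qed.
Lemma join_incr x y : inc y (join x y). Proof. by case/andP: (join_inc x y). Qed.
Lemma meet_incl l m : inc (join l m) l. Proof. by rewrite incC join_incl. Qed.
Lemma meet_incr l m : inc (join l m) m. Proof. by rewrite incC join_incr. Qed.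

Lemma joinE x y l : x != y -> inc x l -> inc y l -> join x y = l.
Proof. by move=> xy; apply: join_unique xy (join_incl x y) (join_incr x y). Qed.

Lemma meetE l m a : l != m -> inc a l -> inc a m -> join l m = a.
Proof. by move=> lm; apply: meet_unique lm (meet_incl l m) (meet_incr l m). Qed.

Lemma notinc_of_join x y l : x != y -> inc x l -> l != join x y -> ~~ inc y l.
Proof. by move=> xy xl; apply: contra => yl; rewrite (joinE xy xl yl). Qed.

Lemma setI_pts l m : l != m -> pts l :&: pts m = [set join l m].
Proof.
move=> lm; apply/setP => y; rewrite !inE.
apply/andP/eqP => [[yl ym]|->]; [exact/esym/meetE | by rewrite meet_incl meet_incr].
Qed.

Lemma meet_neq l m n : l != m -> ~~ inc (join l m) n -> join l n != join m n.
Proof.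
move=> lm; apply: contraNneq => e.
by rewrite (meetE lm (meet_incl l n)) ?meet_incr // e meet_incl.
Qed.

Lemma join_neq x a b l : a != b -> inc a l -> inc b l -> ~~ inc x l ->
  join x a != join x b.
Proof.
move=> ab al bl; apply: contraNneq => e.
by rewrite -(join_unique ab (join_incr x a) _ al bl) ?join_incl // e join_incr.
Qed.

Lemma card_rV_submx k (K : 'M[F]_(k, 3)) :
  #|[set u : 'rV[F]_3 | (u <= K)%MS]| = (q ^ \rank K)%N.
Proof.
have -> : [set u : 'rV[F]_3 | (u <= K)%MS] = [set w *m row_base K | w in [set: 'rV_(\rank K)]].
  apply/setP => u; rewrite inE; apply/idP/imsetP => [|[w _ ->]].
    by rewrite -{1}(eq_row_base K) => /submxP[w ->]; exists w; rewrite ?inE.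
  by rewrite -(eq_row_base K) submxMl.
rewrite card_in_imset; first by rewrite cardsT card_mx mul1n.
by move=> a b _ _; exact: (row_free_inj (row_base_free K)).
Qed.

(* Each nonzero vector of the row space of K is uniquely a nonzero multiple of a
   point, so the nonzero vectors are in bijection with points times [F^*]. *)
Lemma card_points_submx k (K : 'M[F]_(k, 3)) :
  (#|[set p : point F | (val p <= K)%MS]| * (q - 1) = q ^ \rank K - 1)%N.
Proof.
set A := [set p : point F | (val p <= K)%MS].
have -> : (q - 1)%N = #|[set~ (0 : F)]| by rewrite cardsC1 subn1.
rewrite -cardsX -card_rV_submx (cardsD1 0) inE sub0mx add1n subn1.
rewrite -(@card_in_imset _ _ (fun pc : point F * F => pc.2 *: val pc.1)).
  apply: eq_card => u; rewrite !inE; apply/imsetP/andP.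
    case=> [[p c]]; rewrite !inE /= => /andP[pK c0] ->.
    by rewrite scaler_eq0 negb_or c0 normalized_neq0 ?(valP p) // scalemx_sub.
  case=> u0 uK; have [p [c c0 pc]] := exists_point_scale u0.
  exists (p, c^-1); last by rewrite /= pc scalerA mulVf ?scale1r.
  by rewrite !inE /= invr_eq0 c0 andbT pc scalemx_sub.
move=> [p c] [p' c']; rewrite !inE /= => /andP[_ c0] /andP[_ c'0] E.
have pp' : p = p'.
  apply/val_inj/normalized_submx_eq; rewrite ?(valP p) ?(valP p') //.
  by rewrite -[val p]scale1r -(mulVf c0) -scalerA E scalerA scalemx_sub.
rewrite -pp' in E *; congr (_, _); apply/eqP; rewrite -subr_eq0.
by move/eqP: E; rewrite -subr_eq0 -scalerBl scaler_eq0 (negbTE (normalized_neq0 (valP p))) orbF.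
Qed.

Lemma card_pts l : #|pts l| = q.+1.
Proof.
have E : pts l = [set p : point F | (val p <= kermx (val l)^T)%MS].
  by apply/setP => p; rewrite !inE incE sub_kermx.
have := card_points_submx (kermx (val l)^T).
rewrite -E mxrank_ker mxrank_tr rank_rV normalized_neq0 ?(valP l) //.
have := card_finNzRing_gt1 F; move: #|pts l| => c q1 /=.
rewrite expnS expn1; move: q q1 => n n1 cn; clear -n1 cn; nia.
Qed.

Lemma card_points : #|[set: point F]| = (q ^ 2 + q + 1)%N.
Proof.
have E : [set: point F] = [set p : point F | (val p <= 1%:M)%MS].
  by apply/setP => p; rewrite !inE submx1.
have := card_points_submx (1%:M : 'M[F]_3); rewrite -E mxrank1.
have := card_finNzRing_gt1 F; move: #|_| => c q1.
rewrite !expnS expn0 muln1; move: q q1 => n n1 cn; clear -n1 cn; nia.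
Qed.

Lemma card_pencil x : #|[set l | inc x l]| = q.+1.
Proof. by rewrite -(card_pts x); apply: eq_card => l; rewrite !inE incC. Qed.

Lemma card_setCI_pts (S : {set point F}) l : #|~: S :&: pts l| = (q.+1 - #|S :&: pts l|)%N.
Proof. by rewrite setIC -setDE cardsD card_pts setIC. Qed.

Lemma exists_pts_neq x l : exists2 y, inc y l & y != x.
Proof.
have : (0 < #|pts l :\ x|)%N.
  have := cardsD1 x (pts l); rewrite card_pts; have := card_finNzRing_gt1 F.
  by move: q #|_| => n k; case: (x \in pts l) => /=; lia.
by case/card_gt0P => y; rewrite !inE => /andP[yx yl]; exists y.
Qed.

Lemma card_by_pencil (S : {set point F}) P :
  #|S| = ((P \in S) + \sum_(l | inc P l) (#|S :&: pts l| - (P \in S)))%N.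
Proof.
rewrite (cardsD1 P S); congr (_ + _)%N.
(* A point y != P lies on exactly one line through P, namely join P y. *)
transitivity (\sum_(y in S :\ P) \sum_(l | inc P l) (inc y l : nat))%N.
  rewrite -sum1_card; apply: eq_bigr => y; rewrite !inE eq_sym => /andP[Py _].
  rewrite (bigD1 (join P y)) ?join_incl //= join_incr big1 // => l /andP[Pl lPy].
  by case: (boolP (inc y l)) => // yl; rewrite (joinE Py Pl yl) eqxx in lPy.
rewrite exchange_big; apply: eq_bigr => l Pl.
have -> : (#|S :&: pts l| - (P \in S) = #|(S :\ P) :&: pts l|)%N.
  by rewrite setIDAC (cardsD1 P (S :&: pts l)) !inE Pl andbT addKn.
rewrite -sum1_card big_mkcond [RHS]big_mkcond /=; apply: eq_bigr => y _.
by rewrite !inE; case: (_ && _); case: (inc y l).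
Qed.

Lemma sum_pencil x (E : {set point F}) (g : point F -> nat) k :
  (forall l, l \in E -> inc x l) -> (forall l, inc x l -> l \notin E -> g l = k) ->
  (\sum_(l | inc x l) g l = \sum_(l in E) g l + (q.+1 - #|E|) * k)%N.
Proof.
move=> Ex gk; set X := [set l | inc x l].
have EX : X :&: E = E by apply/setIidPr/subsetP => l /Ex; rewrite inE.
rewrite (eq_bigl (mem X)) => [|l]; last by rewrite /= inE.
have cXE : #|X :\: E| = (q.+1 - #|E|)%N by rewrite cardsD EX card_pencil.
rewrite (big_setID E) EX -cXE -sum_nat_const.
by congr (_ + _)%N; apply: eq_bigr => l; rewrite !inE => /andP[lE xl]; apply: gk.
Qed.

Lemma sum_pencil_const x (E : {set point F}) (g : point F -> nat) k1 k :
  (forall l, l \in E -> inc x l) -> (forall l, l \in E -> g l = k1) ->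
  (forall l, inc x l -> l \notin E -> g l = k) ->
  (\sum_(l | inc x l) g l = #|E| * k1 + (q.+1 - #|E|) * k)%N.
Proof. by move=> Ex gk1 gk; rewrite (sum_pencil Ex gk) (eq_bigr _ gk1) sum_nat_const. Qed.

Lemma spans_noncollinear (S : {set point F}) a b c : a \in S -> b \in S -> c \in S ->
  (forall l, ~~ [&& inc a l, inc b l & inc c l]) -> spans S.
Proof.
move=> aS bS cS abc; rewrite /spans; set M := (\sum_(p in S) <<val p>>)%MS.
have := rank_leq_col M; rewrite leq_eqVlt => /orP[//|/exists_line_kernel[l Ml]].
have Sl p : p \in S -> inc p l.
  move=> pS; rewrite incE; have : (val p <= M)%MS by rewrite (sumsmx_sup p) ?genmxE.
  by case/submxP => w ->; rewrite -mulmxA Ml mulmx0.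
by move: (abc l); rewrite !Sl.
Qed.

Lemma spans_two_lines (S : {set point F}) l m : l != m ->
  pts l \subset S -> pts m \subset S -> spans S.
Proof.
move=> lm /subsetP lS /subsetP mS; set P := join l m.
have [y yl yP] := exists_pts_neq P l; have [z zm zP] := exists_pts_neq P m.
apply: (spans_noncollinear (lS P _) (lS y _) (mS z _)); rewrite ?inE ?meet_incl //.
move=> n; apply/and3P => [[Pn yn zn]].
have ln := join_unique yP yl (meet_incl l m) yn Pn.
have mn := join_unique zP zm (meet_incr l m) zn Pn.
by rewrite ln mn eqxx in lm.
Qed.

Lemma optimal_saturatingP (S : {set point F}) mu : spans S ->
  (#|S| < q ^ 2 + q + 1)%N -> (forall x, x \notin S -> secant_mult S x = mu) ->
  optimal_saturating mu S.
Proof.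
move=> sS cS muS; split=> //; split=> // [|x /muS -> //].
by apply: contraTneq cS => ->; rewrite card_points ltnn.
Qed.

Lemma mem_union_lines (Ls : {set point F}) y :
  (y \in union_lines Ls) = [exists m in Ls, inc y m].
Proof.
apply/bigcupP/existsP => [[m mL]|[m /andP[mL ym]]]; last by exists m; rewrite ?inE.
by rewrite inE => ym; exists m; rewrite mL.
Qed.

Lemma mem_union_lines_inc (Ls : {set point F}) l y : l \in Ls -> inc y l ->
  y \in union_lines Ls.
Proof. by move=> lL yl; apply/bigcupP; exists l; rewrite ?inE. Qed.

Lemma union_linesI_pts (Ls : {set point F}) l : l \in Ls ->
  union_lines Ls :&: pts l = pts l.
Proof. by move=> lL; apply/setIidPr/(bigcup_sup l lL). Qed.

Lemma spans_union_lines (Ls : {set point F}) : (1 < #|Ls|)%N -> spans (union_lines Ls).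
Proof.
case/card_gt1P => l [m [lL mL lm]].
by apply: (spans_two_lines lm); apply: bigcup_sup.
Qed.

Section ConcurrentLines.
Variables (P : point F) (Ls : {set point F}).
Hypothesis LsP : forall l, l \in Ls -> inc P l.
Local Notation U := (union_lines Ls).

Lemma card_union_linesI_pts l : ~~ inc P l -> #|U :&: pts l| = #|Ls|.
Proof.
move=> Pl; have lLs m : m \in Ls -> m != l by move=> /LsP Pm; apply: contraNneq Pl => <-.
have -> : U :&: pts l = [set join m l | m in Ls].
  apply/setP => y; rewrite inE mem_union_lines inE; apply/andP/imsetP.
    by case=> /existsP[m /andP[mL ym]] yl; exists m => //; rewrite (meetE (lLs m mL) ym yl).
  by case=> m mL ->; rewrite meet_incr; split=> //; apply/existsP; exists m; rewrite mL meet_incl.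
rewrite card_in_imset // => m m' mL m'L; apply: contra_eq => mm'.
by rewrite meet_neq // (meetE mm' (LsP mL) (LsP m'L)).
Qed.

Lemma union_linesI_pencil l : Ls != set0 -> inc P l -> l \notin Ls -> U :&: pts l = [set P].
Proof.
case/set0Pn => m0 m0L Pl lL; apply/setP => y; rewrite inE mem_union_lines !inE.
apply/andP/eqP => [[/existsP[m /andP[mL ym]] yl]|->]; last first.
  by split=> //; apply/existsP; exists m0; rewrite m0L LsP.
have ml : m != l by apply: contraNneq lL => <-.
exact/esym/(meet_unique ml (LsP mL) Pl).
Qed.

Lemma card_concurrent_lines : Ls != set0 -> #|U| = (1 + #|Ls| * q)%N.
Proof.
move=> Ls0; have /set0Pn[m0 m0L] := Ls0.
have PU : P \in U by apply: (mem_union_lines_inc m0L); rewrite LsP.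
rewrite (card_by_pencil U P) PU (@sum_pencil_const P Ls _ q 0) //.
- by rewrite muln0 addn0.
- by move=> l lL; rewrite union_linesI_pts // card_pts subn1.
- by move=> l Pl lL; rewrite union_linesI_pencil // cards1.
Qed.

Lemma secant_concurrent_lines x : Ls != set0 -> x \notin U ->
  secant_mult U x = ('C(#|Ls|, 2) * q)%N.
Proof.
move=> Ls0 xU; have /set0Pn[m0 m0L] := Ls0.
have xP : x != P by apply: contraNneq xU => ->; apply: (mem_union_lines_inc m0L); rewrite LsP.
set n0 := join x P.
have n0L : n0 \notin Ls.
  by apply: contra xU => n0L; apply: (mem_union_lines_inc n0L); rewrite join_incl.
rewrite /secant_mult (@sum_pencil_const x [set n0] _ 'C(1, 2) 'C(#|Ls|, 2)).
- by rewrite cards1 mul1n subSS subn0 mulnC.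
- by move=> l /set1P ->; rewrite join_incl.
- by move=> l /set1P ->; rewrite union_linesI_pencil ?join_incr // cards1.
move=> l xl; rewrite inE => ln0; rewrite card_union_linesI_pts //.
by apply: contra ln0 => Pl; rewrite eq_sym /n0 (joinE xP xl Pl).
Qed.

Lemma concurrent_lines_optimal : (2 <= #|Ls| <= q)%N ->
  #|U| = (1 + #|Ls| * q)%N /\ optimal_saturating ('C(#|Ls|, 2) * q)%N U.
Proof.
case/andP => L2 Lq; have Ls0 : Ls != set0 by rewrite -card_gt0 (leq_trans _ L2).
split; first exact: card_concurrent_lines.
apply: optimal_saturatingP; first exact: spans_union_lines.
  rewrite card_concurrent_lines //; move: q Lq => n; nia.
by move=> x; apply: secant_concurrent_lines.
Qed.

End ConcurrentLines.

Section ConcurrentLinesPlusPoints.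
Variables (G m : point F) (Ls B : {set point F}).
Hypotheses (cardLs : #|Ls| = q) (LsG : forall l, l \in Ls -> inc G l) (Gm : inc G m).
Hypotheses (mLs : m \notin Ls) (Bm : B \subset pts m) (GB : G \notin B).
Local Notation U := (union_lines Ls).
Local Notation S := (union_lines Ls :|: B).

Lemma pencil_lines_plus l : inc G l -> (l \in Ls) || (l == m).
Proof.
move=> Gl; have sub : m |: Ls \subset [set n | inc G n].
  by apply/subsetP => n; rewrite !inE => /orP[/eqP ->|/LsG].
have /eqP E : m |: Ls == [set n | inc G n].
  by rewrite eqEcard sub card_pencil cardsU1 mLs cardLs /=; exact: ltnSn.
have : l \in [set n | inc G n] by rewrite inE.
by rewrite -E !inE orbC.
Qed.

Let Ls_neq0 : Ls != set0.
Proof. by rewrite -card_gt0 cardLs; apply: ltnW; apply: card_finNzRing_gt1. Qed.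

Let G_in_S : G \in S.
Proof. by have /set0Pn[l lL] := Ls_neq0; rewrite inE (mem_union_lines_inc lL) ?LsG. Qed.

Lemma lines_plusI_pts l : l \in Ls -> S :&: pts l = pts l.
Proof. by move=> lL; rewrite setIUl union_linesI_pts //; apply/setUidPl/subsetIr. Qed.

Lemma lines_plusI_pts_m : S :&: pts m = G |: B.
Proof.
by rewrite setIUl (union_linesI_pencil LsG) ?Ls_neq0 //; congr (_ :|: _); apply/setIidPl.
Qed.

Lemma card_lines_plus : #|S| = (1 + q ^ 2 + #|B|)%N.
Proof.
rewrite (card_by_pencil S G) G_in_S (@sum_pencil_const G Ls _ q #|B|) //.
- by rewrite cardLs subSn // subnn mul1n addnA.
- by move=> l lL; rewrite lines_plusI_pts // card_pts subn1.
move=> l Gl lL; have /eqP -> : l == m by move: (pencil_lines_plus Gl); rewrite (negbTE lL).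
by rewrite lines_plusI_pts_m cardsU1 GB subn1.
Qed.

Lemma secant_lines_plus x : x \notin S ->
  secant_mult S x = ('C(#|B|.+1, 2) + 'C(q, 2) * q)%N.
Proof.
move=> xS; have Gx : G != x by apply: contraNneq xS => <-; exact: G_in_S.
have xm : inc x m.
  case/orP: (pencil_lines_plus (join_incl G x)) => [jL|/eqP <-]; last exact: join_incr.
  by move: xS; rewrite inE (mem_union_lines_inc jL) ?join_incr.
rewrite /secant_mult (@sum_pencil_const x [set m] _ 'C(#|B|.+1, 2) 'C(q, 2)).
- by rewrite cards1 mul1n subSS subn0 mulnC.
- by move=> l /set1P ->.
- by move=> l /set1P ->; rewrite lines_plusI_pts_m cardsU1 GB.
move=> l xl; rewrite inE => lm.
have Gl : ~~ inc G l by apply: contra lm => Gl; rewrite (join_unique Gx Gl xl Gm xm).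
have -> : S :&: pts l = U :&: pts l.
  rewrite setIUl; apply/setUidPl/subsetP => y; rewrite !inE => /andP[yB yl].
  have ym : inc y m by move/subsetP: Bm => /(_ y yB); rewrite inE.
  have yx : y = x by apply: meet_unique lm yl ym xl xm.
  by move: xS; rewrite -yx inE yB orbT.
by rewrite (card_union_linesI_pts LsG) ?cardLs.
Qed.

Lemma lines_plus_optimal : (1 <= #|B| <= q - 1)%N ->
  #|S| = (1 + q ^ 2 + #|B|)%N /\ optimal_saturating ('C(#|B|.+1, 2) + 'C(q, 2) * q)%N S.
Proof.
case/andP => B1 Bq; split; first exact: card_lines_plus.
apply: optimal_saturatingP; last exact: secant_lines_plus.
- have Ls1 : (1 < #|Ls|)%N by rewrite cardLs card_finNzRing_gt1.
  have [l [l' [lL l'L ll']]] := card_gt1P Ls1.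
  by apply: (spans_two_lines ll'); apply: subset_trans (subsetUl _ B); exact: bigcup_sup.
- by rewrite card_lines_plus; move: q Bq => n; lia.
Qed.

End ConcurrentLinesPlusPoints.

Definition vertices l1 l2 l3 : {set point F} := [set join l1 l2; join l1 l3; join l2 l3].

Lemma nonconcurrent_neq l1 l2 l3 : nonconcurrent l1 l2 l3 ->
  [/\ l1 != l2, l1 != l3 & l2 != l3].
Proof.
by move=> nc; split; apply/eqP => e; apply: nc;
  [exists (join l1 l3) | exists (join l1 l2) | exists (join l1 l2)];
  rewrite -e meet_incl meet_incr.
Qed.

Lemma nonconcurrent_vertex l1 l2 l3 : nonconcurrent l1 l2 l3 ->
  [/\ ~~ inc (join l1 l2) l3, ~~ inc (join l1 l3) l2 & ~~ inc (join l2 l3) l1].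
Proof.
by move=> nc; split; apply/negP => h; apply: nc;
  [exists (join l1 l2) | exists (join l1 l3) | exists (join l2 l3)];
  rewrite meet_incl meet_incr h.
Qed.

Lemma vertices_neq l1 l2 l3 : nonconcurrent l1 l2 l3 ->
  [/\ join l1 l2 != join l1 l3, join l1 l2 != join l2 l3 & join l1 l3 != join l2 l3].
Proof.
case/nonconcurrent_vertex=> v12 v13 v23.
by split; [apply: contraNneq v12 => -> | apply: contraNneq v12 => -> | apply: contraNneq v13 => ->];
  rewrite ?meet_incl ?meet_incr.
Qed.

Lemma nonconcurrent213 l1 l2 l3 : nonconcurrent l1 l2 l3 -> nonconcurrent l2 l1 l3.
Proof. by move=> nc [x /and3P[x1 x2 x3]]; apply: nc; exists x; rewrite x1 x2 x3. Qed.

Lemma nonconcurrent132 l1 l2 l3 : nonconcurrent l1 l2 l3 -> nonconcurrent l1 l3 l2.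
Proof. by move=> nc [x /and3P[x1 x2 x3]]; apply: nc; exists x; rewrite x1 x2 x3. Qed.

Lemma mem_triangle l1 l2 l3 y :
  (y \in triangle l1 l2 l3) = [|| inc y l1, inc y l2 | inc y l3].
Proof. by rewrite !inE orbA. Qed.

Lemma mem_vertexless_triangle l1 l2 l3 y : (y \in vertexless_triangle l1 l2 l3) =
  [|| inc y l1, inc y l2 | inc y l3] &&
  ~~ [|| inc y l1 && inc y l2, inc y l1 && inc y l3 | inc y l2 && inc y l3].
Proof. by rewrite !inE; case: (inc y l1); case: (inc y l2); case: (inc y l3). Qed.

Lemma triangle213 l1 l2 l3 : triangle l1 l2 l3 = triangle l2 l1 l3.
Proof. by apply/setP => y; rewrite !mem_triangle orbCA. Qed.

Lemma triangle132 l1 l2 l3 : triangle l1 l2 l3 = triangle l1 l3 l2.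
Proof. by apply/setP => y; rewrite !mem_triangle [_ || inc y l3]orbC. Qed.

Lemma vertexless_triangle213 l1 l2 l3 :
  vertexless_triangle l1 l2 l3 = vertexless_triangle l2 l1 l3.
Proof.
by apply/setP => y; rewrite !mem_vertexless_triangle;
  case: (inc y l1); case: (inc y l2); case: (inc y l3).
Qed.

Lemma vertexless_triangle132 l1 l2 l3 :
  vertexless_triangle l1 l2 l3 = vertexless_triangle l1 l3 l2.
Proof.
by apply/setP => y; rewrite !mem_vertexless_triangle;
  case: (inc y l1); case: (inc y l2); case: (inc y l3).
Qed.

Lemma triangleI_pts l1 l2 l3 l : l1 != l -> l2 != l -> l3 != l ->
  triangle l1 l2 l3 :&: pts l = [set join l1 l; join l2 l; join l3 l].
Proof. by move=> l1l l2l l3l; rewrite !setIUl !setI_pts. Qed.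

Lemma triangleI_pts_vertex l1 l2 l3 l : nonconcurrent l1 l2 l3 ->
  inc (join l1 l2) l -> l1 != l -> l2 != l ->
  triangle l1 l2 l3 :&: pts l = [set join l1 l2; join l3 l].
Proof.
case/nonconcurrent_vertex=> v12 _ _ vl l1l l2l.
have l3l : l3 != l by apply: contraNneq v12 => ->.
rewrite triangleI_pts // (meetE l1l (meet_incl l1 l2) vl) (meetE l2l (meet_incr l1 l2) vl).
by rewrite setUid.
Qed.

Lemma card_triangleI_pts_vertex l1 l2 l3 l : nonconcurrent l1 l2 l3 ->
  inc (join l1 l2) l -> l1 != l -> l2 != l -> #|triangle l1 l2 l3 :&: pts l| = 2%N.
Proof.
move=> nc vl l1l l2l; rewrite triangleI_pts_vertex // cards2.
have [v12 _ _] := nonconcurrent_vertex nc.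
suff -> : join l1 l2 != join l3 l by [].
by apply: contraNneq v12 => ->; rewrite meet_incl.
Qed.

Lemma card_triangleI_pts_generic l1 l2 l3 l : nonconcurrent l1 l2 l3 ->
  ~~ inc (join l1 l2) l -> ~~ inc (join l1 l3) l -> ~~ inc (join l2 l3) l ->
  #|triangle l1 l2 l3 :&: pts l| = 3%N.
Proof.
move=> nc v12 v13 v23; have [n12 n13 n23] := nonconcurrent_neq nc.
rewrite triangleI_pts; first by rewrite cards3 ?meet_neq.
- by apply: contraNneq v12 => ->; rewrite meet_incl.
- by apply: contraNneq v23 => ->; rewrite meet_incl.
- by apply: contraNneq v13 => ->; rewrite meet_incr.
Qed.

Lemma card_triangle l1 l2 l3 : nonconcurrent l1 l2 l3 -> #|triangle l1 l2 l3| = (3 * q)%N.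
Proof.
move=> nc; have [n12 _ _] := nonconcurrent_neq nc; set T := triangle l1 l2 l3.
have Tside l : l \in [set l1; l2] -> T :&: pts l = pts l.
  by move=> /set2P[] ->; apply/setIidPr/subsetP => y; rewrite mem_triangle inE => ->;
    rewrite ?orbT.
rewrite (card_by_pencil T (join l1 l2)) mem_triangle meet_incl.
rewrite (@sum_pencil_const _ [set l1; l2] _ q 1).
- by rewrite cards2 n12; move: q (card_finNzRing_gt1 F) => n n1; lia.
- by move=> l /set2P[] ->; rewrite ?meet_incl ?meet_incr.
- by move=> l lE; rewrite Tside // card_pts subn1.
move=> l vl; rewrite !inE negb_or ![l == _]eq_sym => /andP[l1l l2l].
by rewrite (card_triangleI_pts_vertex nc vl l1l l2l).
Qed.

Lemma secant_triangle l1 l2 l3 x : nonconcurrent l1 l2 l3 -> x \notin triangle l1 l2 l3 ->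
  secant_mult (triangle l1 l2 l3) x = (3 * (q - 1))%N.
Proof.
move=> nc; rewrite mem_triangle !negb_or => /and3P[x1 x2 x3].
have [d1 d2 d3] := vertices_neq nc.
set E := [set join x (join l1 l2); join x (join l1 l3); join x (join l2 l3)].
rewrite /secant_mult (@sum_pencil_const x E _ 1 3).
- rewrite cards3; first by move: q (card_finNzRing_gt1 F) => n n1; lia.
  + by apply: join_neq d1 _ _ x1; rewrite meet_incl.
  + by apply: join_neq d2 _ _ x2; rewrite ?meet_incl ?meet_incr.
  + by apply: join_neq d3 _ _ x3; rewrite meet_incr.
- by move=> l; rewrite !inE -orbA => /or3P[] /eqP ->; rewrite join_incl.
- have side_neq s p : ~~ inc x s -> s != join x p.
    by move=> xs; apply: contraNneq xs => ->; exact: join_incl.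
  move=> l; rewrite !inE -orbA => /or3P[] /eqP ->.
  + by rewrite (card_triangleI_pts_vertex nc (join_incr _ _)
      (side_neq _ _ x1) (side_neq _ _ x2)).
  + by rewrite triangle132 (card_triangleI_pts_vertex (nonconcurrent132 nc) (join_incr _ _)
      (side_neq _ _ x1) (side_neq _ _ x3)).
  + by rewrite triangle213 triangle132 (card_triangleI_pts_vertex
      (nonconcurrent132 (nonconcurrent213 nc)) (join_incr _ _)
      (side_neq _ _ x2) (side_neq _ _ x3)).
move=> l xl; rewrite !inE !negb_or => /andP[/andP[l12 l13] l23].
have xv12 : x != join l1 l2 by apply: contraNneq x1 => ->; rewrite meet_incl.
have xv13 : x != join l1 l3 by apply: contraNneq x1 => ->; rewrite meet_incl.
have xv23 : x != join l2 l3 by apply: contraNneq x2 => ->; rewrite meet_incl.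
by rewrite (card_triangleI_pts_generic nc (notinc_of_join xv12 xl l12)
  (notinc_of_join xv13 xl l13) (notinc_of_join xv23 xl l23)).
Qed.

Lemma triangle_optimal l1 l2 l3 : nonconcurrent l1 l2 l3 ->
  #|triangle l1 l2 l3| = (3 * q)%N /\ optimal_saturating (3 * (q - 1))%N (triangle l1 l2 l3).
Proof.
move=> nc; split; first exact: card_triangle.
have [n12 _ _] := nonconcurrent_neq nc.
apply: optimal_saturatingP; last by move=> x; apply: secant_triangle.
- by apply: (spans_two_lines n12); apply/subsetP => y; rewrite mem_triangle inE => ->;
    rewrite ?orbT.
- by rewrite card_triangle //; move: q (card_finNzRing_gt1 F) => n n1; nia.
Qed.

Lemma vertexless_triangleE l1 l2 l3 : nonconcurrent l1 l2 l3 ->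
  vertexless_triangle l1 l2 l3 = triangle l1 l2 l3 :\: vertices l1 l2 l3.
Proof. by case/nonconcurrent_neq => n12 n13 n23; rewrite /vertexless_triangle !setI_pts. Qed.

Lemma vertices_sub_triangle l1 l2 l3 : vertices l1 l2 l3 \subset triangle l1 l2 l3.
Proof.
by apply/subsetP => y; rewrite !inE -!orbA => /or3P[] /eqP ->;
  rewrite ?meet_incl ?meet_incr ?orbT.
Qed.

Lemma card_vertices l1 l2 l3 : nonconcurrent l1 l2 l3 -> #|vertices l1 l2 l3| = 3%N.
Proof. by case/vertices_neq; exact: cards3. Qed.

Lemma card_vertexless_triangle_compl l1 l2 l3 : nonconcurrent l1 l2 l3 ->
  #|~: vertexless_triangle l1 l2 l3| = (q ^ 2 - 2 * q + 4)%N.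
Proof.
move=> nc; have := cardsC (vertexless_triangle l1 l2 l3).
rewrite -cardsT card_points vertexless_triangleE // cardsD card_triangle //.
rewrite (setIidPr (vertices_sub_triangle _ _ _)) card_vertices //.
by move: q (card_finNzRing_gt1 F) #|_| => n n1 k; rewrite expnS expn1; nia.
Qed.

Lemma vertexless_complI_side l1 l2 l3 : nonconcurrent l1 l2 l3 ->
  ~: vertexless_triangle l1 l2 l3 :&: pts l1 = [set join l1 l2; join l1 l3].
Proof.
move=> nc; have [_ _ v23] := nonconcurrent_vertex nc.
apply/setP => y; rewrite vertexless_triangleE // !inE.
have [y1|y1] := boolP (inc y l1).
  have -> : (y == join l2 l3) = false by apply/negbTE; apply: contraNneq v23 => <-.
  by rewrite /= !andbT orbF negbK.
by rewrite andbF; apply/esym/negP => /orP[] /eqP e; rewrite e meet_incl in y1.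
Qed.

Lemma vertexlessI_pts_vertex l1 l2 l3 l : nonconcurrent l1 l2 l3 ->
  inc (join l1 l2) l -> l1 != l -> l2 != l ->
  vertexless_triangle l1 l2 l3 :&: pts l = [set join l3 l].
Proof.
move=> nc vl l1l l2l; have [v12 _ _] := nonconcurrent_vertex nc.
rewrite vertexless_triangleE // setIDAC triangleI_pts_vertex //.
have [d1 d2 _] := vertices_neq nc.
have notV : join l3 l \notin vertices l1 l2 l3.
  rewrite !inE -!orbA; apply/or3P => -[] /eqP e.
  - by move: (meet_incl l3 l); rewrite e (negbTE v12).
  - by move/eqP: l1l; apply; apply: (join_unique d1); rewrite ?meet_incl // -e meet_incr.
  - move/eqP: l2l; apply; apply: (join_unique d2); rewrite ?meet_incl ?meet_incr //.
    by rewrite -e meet_incr.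
have /eqP V12 : [set join l1 l2] :\: vertices l1 l2 l3 == set0.
  by rewrite setD_eq0 sub1set !inE eqxx.
by rewrite setDUl V12 set0U; apply/setDidPl; rewrite disjoints1.
Qed.

Lemma card_vertexlessI_pts_generic l1 l2 l3 l : nonconcurrent l1 l2 l3 ->
  ~~ inc (join l1 l2) l -> ~~ inc (join l1 l3) l -> ~~ inc (join l2 l3) l ->
  #|vertexless_triangle l1 l2 l3 :&: pts l| = 3%N.
Proof.
move=> nc v12 v13 v23; rewrite vertexless_triangleE // setIDAC.
rewrite (setDidPl _) ?card_triangleI_pts_generic //.
rewrite disjoint_subset; apply/subsetP => y; rewrite !inE -!orbA => /andP[_ yl].
by apply/or3P => -[] /eqP e; move: yl; rewrite e; apply/negP.
Qed.

Lemma secant_vertexless_side l1 l2 l3 x : nonconcurrent l1 l2 l3 ->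
  inc x l1 -> ~~ inc x l2 -> ~~ inc x l3 ->
  secant_mult (~: vertexless_triangle l1 l2 l3) x =
    (1 + 'C(q, 2) + (q - 1) * 'C(q - 2, 2))%N.
Proof.
move=> nc x1 x2 x3.
have [_ _ v23] := nonconcurrent_vertex nc; have [d1 _ _] := vertices_neq nc.
have xv23 : x != join l2 l3 by apply: contraNneq v23 => <-.
set a := join x (join l2 l3).
have [a1 a2 a3] : [/\ l1 != a, l2 != a & l3 != a].
  by split; [apply: contraNneq v23 | apply: contraNneq x2 | apply: contraNneq x3] => ->;
    rewrite ?join_incl ?join_incr.
rewrite /secant_mult (@sum_pencil x [set l1; a] _ 'C(q - 2, 2)).
- rewrite big_setU1 ?inE // big_set1 vertexless_complI_side // cards2 d1.
  rewrite card_setCI_pts vertexless_triangle213 vertexless_triangle132.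
  rewrite (vertexlessI_pts_vertex (nonconcurrent132 (nonconcurrent213 nc))) ?join_incr //.
  by rewrite (meetE a1 x1 (join_incl _ _)) cards1 subn1 cards2 a1 subSS.
- by move=> l /set2P[] ->; rewrite ?join_incl.
move=> l xl; rewrite !inE negb_or => /andP[ll1 la].
have xv12 : x != join l1 l2 by apply: contraNneq x2 => ->; rewrite meet_incr.
have xv13 : x != join l1 l3 by apply: contraNneq x3 => ->; rewrite meet_incr.
have v12l := notinc_of_join xv12 xl; rewrite (joinE xv12 x1 (meet_incl l1 l2)) in v12l.
have v13l := notinc_of_join xv13 xl; rewrite (joinE xv13 x1 (meet_incl l1 l3)) in v13l.
rewrite card_setCI_pts (card_vertexlessI_pts_generic nc (v12l ll1) (v13l ll1)).
  by rewrite subSS.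
exact: notinc_of_join xv23 xl la.
Qed.

Lemma vertexless_triangle_compl_optimal l1 l2 l3 : nonconcurrent l1 l2 l3 ->
  #|~: vertexless_triangle l1 l2 l3| = (q ^ 2 - 2 * q + 4)%N /\
  optimal_saturating (1 + 'C(q, 2) + (q - 1) * 'C(q - 2, 2))%N
    (~: vertexless_triangle l1 l2 l3).
Proof.
move=> nc; split; first exact: card_vertexless_triangle_compl.
have [_ _ v23] := nonconcurrent_vertex nc; have [d1 _ _] := vertices_neq nc.
apply: optimal_saturatingP.
- have inS p : p \in vertices l1 l2 l3 -> p \in ~: vertexless_triangle l1 l2 l3.
    by move=> pV; rewrite vertexless_triangleE // in_setC in_setD pV.
  apply: (@spans_noncollinear _ (join l1 l2) (join l1 l3) (join l2 l3));
    rewrite ?inS ?inE ?eqxx ?orbT //.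
  move=> n; apply/and3P => -[v12n v13n v23n].
  by rewrite (join_unique d1 (meet_incl l1 l2) (meet_incl l1 l3) v12n v13n) v23n in v23.
- by rewrite card_vertexless_triangle_compl //; move: q (card_finNzRing_gt1 F) => n n1; nia.
move=> x; rewrite inE negbK mem_vertexless_triangle => /andP[/or3P[] xl nv].
- have [x2 x3] : ~~ inc x l2 /\ ~~ inc x l3.
    by split; apply: contra nv => h; rewrite xl h ?orbT.
  exact: secant_vertexless_side.
- have [x1 x3] : ~~ inc x l1 /\ ~~ inc x l3.
    by split; apply: contra nv => h; rewrite xl h ?orbT.
  by rewrite vertexless_triangle213; apply: secant_vertexless_side (nonconcurrent213 nc) _ _ _.
- have [x1 x2] : ~~ inc x l1 /\ ~~ inc x l2.
    by split; apply: contra nv => h; rewrite xl h ?orbT.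
  rewrite vertexless_triangle132 vertexless_triangle213.
  exact: secant_vertexless_side (nonconcurrent213 (nonconcurrent132 nc)) _ _ _.
Qed.

End ProjectivePlane.

Unset Implicit Arguments.
Local Close Scope ring_scope.

Theorem theorem7p3 (F : finFieldType) :
  let q := #|F| in
  (* (i) L distinct concurrent lines, 2 <= L <= q *)
  (forall (P : point F) (Ls : {set line F}) (L : nat),
      (2 <= L <= q)%N -> #|Ls| = L -> (forall l, l \in Ls -> inc P l) ->
      #|union_lines Ls| = (1 + L * q)%N /\
      optimal_saturating ('C(L, 2) * q)%N (union_lines Ls)) /\
  (* (ii) q lines through G plus b points (other than G) of the remaining line m *)
  (forall (G : point F) (Ls : {set line F}) (m : line F) (B : {set point F}) (b : nat),
      #|Ls| = q -> (forall l, l \in Ls -> inc G l) ->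
      inc G m -> m \notin Ls ->
      B \subset pts m -> G \notin B -> #|B| = b -> (1 <= b <= q - 1)%N ->
      #|union_lines Ls :|: B| = (1 + q ^ 2 + b)%N /\
      optimal_saturating ('C(b.+1, 2) + 'C(q, 2) * q)%N (union_lines Ls :|: B)) /\
  (* (iii) triangle *)
  (forall l1 l2 l3 : line F, nonconcurrent l1 l2 l3 ->
      #|triangle l1 l2 l3| = (3 * q)%N /\
      optimal_saturating (3 * (q - 1))%N (triangle l1 l2 l3)) /\
  (* (iv) complement of a vertex-less triangle *)
  (forall l1 l2 l3 : line F, nonconcurrent l1 l2 l3 ->
      #|~: vertexless_triangle l1 l2 l3| = (q ^ 2 - 2 * q + 4)%N /\
      optimal_saturating (1 + 'C(q, 2) + (q - 1) * 'C(q - 2, 2))%N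
        (~: vertexless_triangle l1 l2 l3)).
Proof.
move=> q; split; [|split; [|split]].
- move=> P Ls L hL cLs LsP; rewrite -cLs in hL *; exact: concurrent_lines_optimal LsP hL.
- move=> G Ls m B b cLs LsG Gm mLs Bm GB <- hb.
  exact: lines_plus_optimal cLs LsG Gm mLs Bm GB hb.
- by move=> l1 l2 l3; apply: triangle_optimal.
- by move=> l1 l2 l3; apply: vertexless_triangle_compl_optimal.
Qed.
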